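(* Let $s_p,s_q\in S$ with $s_p$ to the left of $s_q$. Let $W_p$ be the wedge with apex $s_p$ whose axis points downward to the right making angle $\theta_p$ with the horizontal, and $W_q$ the wedge with apex $s_q$ whose axis points downward to the left making angle $\theta_q$ with the horizontal, where $\theta_p-\alpha>0$, $\theta_q-\alpha>0$ and $\theta_p+\theta_q+2\alpha<\pi$, so that $W_p\cap W_q$ is a convex quadrilateral. Each wedge is bounded by an inner ray (angle $\theta-\alpha$ below the horizontal) and an outer ray (angle $\theta+\alpha$ below the horizontal). Let $v_1$ be the intersection of the two inner rays, $v_3$ the intersection of the two outer rays, $v_2$ the intersection of the outer ray of $W_p$ with the inner ray of $W_q$, and $v_4$ the intersection of the inner ray of $W_p$ with the outer ray of $W_q$; set $\mathrm{diag}_1=|v_1v_3|$ and $\mathrm{diag}_2=|v_2v_4|$. If $\theta_p+\theta_q\ge\frac{\pi}{2}+\alpha$, then $\mathrm{diag}_1>\mathrm{diag}_2$.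
   Context: Work in $\mathbb{R}^2$ with coordinates $(x,z)$; the viewing line is $S=\{z=h\}$, $h>0$. Fix $\alpha>0$. A wedge with apex $s$ and axis unit vector $u$ is $W(s,u)=\{s+rv:\ r\ge0,\ |v|=1,\ \angle(v,u)\le\alpha\}$ (opening angle $2\alpha$). *)

From Stdlib Require Import Reals Lra.
Open Scope R_scope.

Definition point := (R * R)%type.

Definition pdist (a b : point) : R :=
  sqrt ((fst a - fst b)^2 + (snd a - snd b)^2).

Definition on_ray (s d v : point) : Prop :=
  exists r : R, 0 <= r /\ v = (fst s + r * fst d, snd s + r * snd d).

Definition dir_down_right (phi : R) : point := (cos phi, - sin phi).
Definition dir_down_left (phi : R) : point := (- cos phi, - sin phi).

From Stdlib Require Import Reals Lra Psatz.
Open Scope R_scope.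

(* A point on the ray from s_p with cotangent u (angle below the horizontal)
   and on the ray from s_q with cotangent w lies at depth d / (u + w) below S,
   where d = xq - xp, with horizontal offset u times its depth.  So both
   diagonals are rational functions of the four cotangents u1 > u3 (at s_p)
   and w1 > w3 (at s_q).  Clearing denominators, diag1^2 - diag2^2 factors as
   (u1 - u3)(w1 - w3) times a quantity that is positive as soon as
   u1 w3 <= 1 and u3 w1 <= 1; these two inequalities say that the angle sums
   (thp - alpha) + (thq + alpha) and (thp + alpha) + (thq - alpha) are at
   least pi/2, which is the hypothesis thp + thq >= pi/2 + alpha. *)

Definition cot (x : R) : R := cos x / sin x.

Lemma on_rays_depth a b xp xq h v : 0 < sin a -> 0 < sin b ->
  on_ray (xp, h) (dir_down_right a) v -> on_ray (xq, h) (dir_down_left b) v ->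
  exists rho, v = (xp + rho * cot a, h - rho) /\ rho * (cot a + cot b) = xq - xp.
Proof.
  unfold on_ray, dir_down_right, dir_down_left, cot; cbn [fst snd].
  intros Ha Hb [r [_ ->]] [t [_ Ev]].
  injection Ev as Ex Ez.
  assert (Et : t = r * sin a / sin b).
  { apply (Rmult_eq_reg_r (sin b)); [field_simplify |]; lra. }
  exists (r * sin a); split.
  - f_equal; field; lra.
  - subst t.
    transitivity (r * cos a + r * sin a / sin b * cos b); [field |]; lra.
Qed.

Lemma cot_decreasing x y : 0 < x -> x < y -> y < PI -> cot y < cot x.
Proof.
  intros Hx Hxy Hy; unfold cot.
  assert (0 < sin x) by (apply sin_gt_0; lra).
  assert (0 < sin y) by (apply sin_gt_0; lra).
  assert (Hyx : 0 < sin (y - x)) by (apply sin_gt_0; lra).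
  rewrite sin_minus in Hyx.
  apply (Rmult_lt_reg_r (sin x * sin y)); [nra |].
  field_simplify; lra.
Qed.

Lemma cot_add_pos x y : 0 < x -> 0 < y -> x + y < PI -> 0 < cot x + cot y.
Proof.
  intros Hx Hy Hxy; unfold cot.
  assert (0 < sin x) by (apply sin_gt_0; lra).
  assert (0 < sin y) by (apply sin_gt_0; lra).
  assert (Hs : 0 < sin (x + y)) by (apply sin_gt_0; lra).
  rewrite sin_plus in Hs.
  apply (Rmult_lt_reg_r (sin x * sin y)); [nra |].
  field_simplify; lra.
Qed.

Lemma cot_mul_le1 x y : 0 < x -> 0 < y -> x < PI -> y < PI ->
  PI / 2 <= x + y -> x + y <= 3 * (PI / 2) -> cot x * cot y <= 1.
Proof.
  intros Hx Hy HxPI HyPI Hlo Hhi; unfold cot.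
  assert (0 < sin x) by (apply sin_gt_0; lra).
  assert (0 < sin y) by (apply sin_gt_0; lra).
  assert (Hc : cos (x + y) <= 0) by (apply cos_le_0; lra).
  rewrite cos_plus in Hc.
  apply (Rmult_le_reg_r (sin x * sin y)); [nra |].
  field_simplify; lra.
Qed.

(* Squared distance, divided by d^2, between the vertices with cotangent
   pairs (u, w) and (u', w'). *)
Definition vertex_gap (u w u' w' : R) : R :=
  (u / (u + w) - u' / (u' + w')) ^ 2 + (1 / (u + w) - 1 / (u' + w')) ^ 2.

Lemma diagonal_poly_lt u1 u3 w1 w3 :
  u3 < u1 -> w3 < w1 -> 0 < u3 + w3 -> u1 * w3 <= 1 -> u3 * w1 <= 1 ->
  ((u3 * w3 - u1 * w1) ^ 2 + ((u3 + w1) - (u1 + w3)) ^ 2) * ((u1 + w1) * (u3 + w3)) ^ 2 <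
  ((u1 * w3 - u3 * w1) ^ 2 + ((u1 + w1) - (u3 + w3)) ^ 2) * ((u3 + w1) * (u1 + w3)) ^ 2.
Proof.
  intros Hu Hw Hs Hmul1 Hmul2.
  set (N := (u1 * w3 - u3 * w1) ^ 2 + ((u1 + w1) - (u3 + w3)) ^ 2).
  set (P := (u1 + w1) * (u3 + w3)).
  set (T := (1 - u3 * w1) * (u1 + w3) + (1 - u1 * w3) * (u3 + w1)).
  assert (Ediff : N * ((u3 + w1) * (u1 + w3)) ^ 2
      - ((u3 * w3 - u1 * w1) ^ 2 + ((u3 + w1) - (u1 + w3)) ^ 2) * P ^ 2
    = (u1 - u3) * (w1 - w3)
      * (N * (P + (u1 - u3) * (w1 - w3)) + P * ((u3 + w1) + (u1 + w3)) * T))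
    by (unfold N, P, T; ring).
  assert (HN : 0 < N).
  { unfold N.
    assert (0 < ((u1 + w1) - (u3 + w3)) ^ 2) by (apply pow_lt; lra).
    pose proof (pow2_ge_0 (u1 * w3 - u3 * w1)); lra. }
  assert (HP : 0 < P) by (unfold P; nra).
  assert (HT : 0 <= T) by (unfold T; nra).
  assert (Hab : 0 < (u1 - u3) * (w1 - w3)) by nra.
  assert (0 < N * (P + (u1 - u3) * (w1 - w3))) by nra.
  assert (0 <= P * ((u3 + w1) + (u1 + w3)) * T).
  { apply Rmult_le_pos; [apply Rmult_le_pos |]; lra. }
  fold P; nra.
Qed.

Lemma vertex_gap_lt u1 u3 w1 w3 :
  u3 < u1 -> w3 < w1 -> 0 < u3 + w3 -> u1 * w3 <= 1 -> u3 * w1 <= 1 ->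
  vertex_gap u3 w1 u1 w3 < vertex_gap u1 w1 u3 w3.
Proof.
  intros Hu Hw Hs Hmul1 Hmul2.
  set (Q := (u1 + w1) * (u3 + w3) * ((u3 + w1) * (u1 + w3))).
  assert (HQ : 0 < Q) by (unfold Q; repeat apply Rmult_lt_0_compat; lra).
  unfold vertex_gap.
  replace ((u1 / (u1 + w1) - u3 / (u3 + w3)) ^ 2 + (1 / (u1 + w1) - 1 / (u3 + w3)) ^ 2)
    with (((u1 * w3 - u3 * w1) ^ 2 + ((u1 + w1) - (u3 + w3)) ^ 2)
          * ((u3 + w1) * (u1 + w3)) ^ 2 / Q ^ 2) by (unfold Q; field; lra).
  replace ((u3 / (u3 + w1) - u1 / (u1 + w3)) ^ 2 + (1 / (u3 + w1) - 1 / (u1 + w3)) ^ 2)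
    with (((u3 * w3 - u1 * w1) ^ 2 + ((u3 + w1) - (u1 + w3)) ^ 2)
          * ((u1 + w1) * (u3 + w3)) ^ 2 / Q ^ 2) by (unfold Q; field; lra).
  apply Rmult_lt_compat_r.
  - apply Rinv_0_lt_compat, pow_lt; lra.
  - exact (diagonal_poly_lt u1 u3 w1 w3 Hu Hw Hs Hmul1 Hmul2).
Qed.

Lemma pdist_depth_sq xp h d u w u' w' r r' :
  r * (u + w) = d -> r' * (u' + w') = d -> 0 < u + w -> 0 < u' + w' ->
  pdist (xp + r * u, h - r) (xp + r' * u', h - r') = sqrt (d ^ 2 * vertex_gap u w u' w').
Proof.
  intros Er Er' Hs Hs'; unfold pdist, vertex_gap; cbn [fst snd]; f_equal.
  replace r with (d / (u + w)) by (rewrite <- Er; field; lra).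
  replace r' with (d / (u' + w')) by (rewrite <- Er'; field; lra).
  field; lra.
Qed.

Theorem lemma3 (h alpha xp xq thp thq : R) (v1 v2 v3 v4 : point) :
  0 < h -> 0 < alpha -> xp < xq ->
  0 < thp - alpha -> 0 < thq - alpha -> thp + thq + 2 * alpha < PI ->
  on_ray (xp, h) (dir_down_right (thp - alpha)) v1 ->
  on_ray (xq, h) (dir_down_left (thq - alpha)) v1 ->
  on_ray (xp, h) (dir_down_right (thp + alpha)) v3 ->
  on_ray (xq, h) (dir_down_left (thq + alpha)) v3 ->
  on_ray (xp, h) (dir_down_right (thp + alpha)) v2 ->
  on_ray (xq, h) (dir_down_left (thq - alpha)) v2 ->
  on_ray (xp, h) (dir_down_right (thp - alpha)) v4 ->
  on_ray (xq, h) (dir_down_left (thq + alpha)) v4 ->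
  thp + thq >= PI / 2 + alpha ->
  pdist v1 v3 > pdist v2 v4.
Proof.
  intros _ Hal Hx Hp Hq Hs R1p R1q R3p R3q R2p R2q R4p R4q Hge.
  assert (sp1 : 0 < sin (thp - alpha)) by (apply sin_gt_0; lra).
  assert (sp3 : 0 < sin (thp + alpha)) by (apply sin_gt_0; lra).
  assert (sq1 : 0 < sin (thq - alpha)) by (apply sin_gt_0; lra).
  assert (sq3 : 0 < sin (thq + alpha)) by (apply sin_gt_0; lra).
  destruct (on_rays_depth _ _ _ _ _ _ sp1 sq1 R1p R1q) as [r1 [-> E1]].
  destruct (on_rays_depth _ _ _ _ _ _ sp3 sq1 R2p R2q) as [r2 [-> E2]].
  destruct (on_rays_depth _ _ _ _ _ _ sp3 sq3 R3p R3q) as [r3 [-> E3]].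
  destruct (on_rays_depth _ _ _ _ _ _ sp1 sq3 R4p R4q) as [r4 [-> E4]].
  assert (Hu : cot (thp + alpha) < cot (thp - alpha)) by (apply cot_decreasing; lra).
  assert (Hw : cot (thq + alpha) < cot (thq - alpha)) by (apply cot_decreasing; lra).
  assert (Hs3 : 0 < cot (thp + alpha) + cot (thq + alpha)) by (apply cot_add_pos; lra).
  assert (Hm1 : cot (thp - alpha) * cot (thq + alpha) <= 1) by (apply cot_mul_le1; lra).
  assert (Hm2 : cot (thp + alpha) * cot (thq - alpha) <= 1) by (apply cot_mul_le1; lra).
  rewrite (pdist_depth_sq _ _ _ _ _ _ _ _ _ E1 E3) by lra.
  rewrite (pdist_depth_sq _ _ _ _ _ _ _ _ _ E2 E4) by lra.
  apply sqrt_lt_1_alt; split.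
  - apply Rmult_le_pos; [apply pow2_ge_0 |].
    unfold vertex_gap; apply Rplus_le_le_0_compat; apply pow2_ge_0.
  - apply Rmult_lt_compat_l; [apply pow_lt; lra |].
    now apply vertex_gap_lt.
Qed.
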